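(* Let $V, K$ be positive integers and let $\mathbf{p}_1,\dots,\mathbf{p}_K \in [0,1]^V$ be vectors with entries $p_{ij}$. Define $p_i^{\mathrm{OPT}} = \prod_{j=1}^K p_{ij}$ for $i=1,\dots,V$ and $\mathrm{OPT} = \sum_{i=1}^V p_i^{\mathrm{OPT}}$. Then for every $\mathbf{b} \in [0,1]^V$ there exists $j \in \{1,\dots,K\}$ such that $$\sum_{i=1}^V p_{ij} b_i \;\le\; \Big(1-\frac{1}{K}\Big)\sum_{i=1}^V b_i + \frac{\mathrm{OPT}}{K}.$$
   Context: In the paper, $i$ indexes voxels of a map, $j$ indexes depth-measuring rays, $p_{ij}\in[0,1]$ is the (estimated) probability that voxel $i$ is not covered by ray $j$, and $\mathbf b$ is a vector of current per-voxel losses. *)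

From HB Require Import structures.
From mathcomp Require Import all_boot all_order all_algebra.
Set Implicit Arguments. Unset Strict Implicit. Unset Printing Implicit Defensive.
Import Order.TTheory GRing.Theory Num.Theory.
Local Open Scope ring_scope.

Definition p_opt (R : realFieldType) (V K : nat) (p : 'I_V -> 'I_K -> R) (i : 'I_V) : R :=
  \prod_(j < K) p i j.

Definition OPT (R : realFieldType) (V K : nat) (p : 'I_V -> 'I_K -> R) : R :=
  \sum_(i < V) p_opt p i.

From HB Require Import structures.
From mathcomp Require Import all_boot all_order all_algebra.
From mathcomp Require Import ring lra.
Import Order.TTheory GRing.Theory Num.Theory.
Local Open Scope ring_scope.

(* Summing over the rays j, each voxel i contributes
   b_i * sum_j p_ij <= b_i * (K - 1 + p_i^OPT) <= (K - 1) b_i + p_i^OPT,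
   since a sum of K numbers in [0,1] is at most K - 1 plus their product.
   So the K left-hand sides add up to at most K times the right-hand side,
   and the smallest of them is at most their average. *)

Lemma sumr_le_size_sub1_add_prod (R : realDomainType) (I : Type) (s : seq I)
    (q : I -> R) :
  (forall j, 0 <= q j <= 1) ->
  \sum_(j <- s) q j <= (size s)%:R - 1 + \prod_(j <- s) q j.
Proof.
move=> q01; elim: s => [|j s IH]; first by rewrite !big_nil /= addrNK.
rewrite !big_cons /= -natr1.
have P1 : \prod_(k <- s) q k <= 1 by rewrite prodr_ile1.
have /andP[q0 q1] := q01 j.
have : 0 <= (1 - q j) * (1 - \prod_(k <- s) q k) by rewrite mulr_ge0 ?subr_ge0.
rewrite mulrBl mul1r !mulrBr !mulr1; lra.
Qed.

Lemma exists_le_average (R : realFieldType) (K : nat) (f : 'I_K -> R) (c : R) :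
  (0 < K)%N -> \sum_(j < K) f j <= K%:R * c -> exists j, f j <= c.
Proof.
move=> K_gt0 sum_le; apply/existsP; apply: contraT => /existsPn all_gt.
suff : K%:R * c < \sum_(j < K) f j by rewrite ltNge sum_le.
have -> : K%:R * c = \sum_(j < K) c by rewrite sumr_const card_ord mulr_natl.
apply: ltr_sum => [|j _]; last by rewrite ltNge all_gt.
by apply/hasP; exists (Ordinal K_gt0); rewrite ?mem_index_enum.
Qed.

Lemma sum_weighted_le_OPT (R : realFieldType) (V K : nat)
    (p : 'I_V -> 'I_K -> R) (b : 'I_V -> R) :
  (forall i j, 0 <= p i j <= 1) -> (forall i, 0 <= b i <= 1) ->
  \sum_(j < K) \sum_(i < V) p i j * b i
    <= (K%:R - 1) * \sum_(i < V) b i + OPT p.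
Proof.
move=> p01 b01; rewrite exchange_big mulr_sumr -big_split /=.
apply: ler_sum => i _; rewrite -mulr_suml /p_opt.
have := sumr_le_size_sub1_add_prod _ _ (enum 'I_K) (p i) (p01 i).
rewrite size_enum_ord !big_enum => sum_le.
have P0 : 0 <= \prod_(j < K) p i j.
  by rewrite prodr_ge0 // => j _; have /andP[] := p01 i j.
have /andP[b0 b1] := b01 i.
have : b i * \sum_(j < K) p i j <= b i * (K%:R - 1 + \prod_(j < K) p i j).
  exact: ler_wpM2l.
nra.
Qed.

Theorem lemma1 (R : realFieldType) (V K : nat) (hV : (0 < V)%N) (hK : (0 < K)%N)
  (p : 'I_V -> 'I_K -> R)
  (hp : forall i j, 0 <= p i j <= 1)
  (b : 'I_V -> R)
  (hb : forall i, 0 <= b i <= 1) :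
  exists j : 'I_K,
    \sum_(i < V) p i j * b i
      <= (1 - K%:R^-1) * \sum_(i < V) b i + OPT p / K%:R.
Proof.
have K_neq0 : K%:R != 0 :> R by rewrite pnatr_eq0 -lt0n.
apply: exists_le_average hK _.
have -> : K%:R * ((1 - K%:R^-1) * \sum_(i < V) b i + OPT p / K%:R)
          = (K%:R - 1) * \sum_(i < V) b i + OPT p by field.
exact: sum_weighted_le_OPT.
Qed.
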